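(* Let $G$ be a connected, simply-connected nilpotent Lie group with Lie algebra $\mathfrak{g}$, and let $\pi:G\to G/[G,G]$ be the natural projection. Suppose $\mathfrak{g}$ has a basis $\mathcal{X}=\{X_1,\dots,X_m,X_{m+1},\dots,X_n\}$ such that $\pi(X_1),\dots,\pi(X_m)$ form a basis of $\mathfrak{g}/[\mathfrak{g},\mathfrak{g}]$. Let $H\le G$ be a connected subgroup which is $M$-rational relative to $\mathcal{X}$, and suppose $\pi(H)$ contains an element $x$ whose coordinates in the basis $\pi(X_1),\dots,\pi(X_m)$ are bounded in magnitude by $M$. Then there is $\tilde x\in H$ with $\pi(\tilde x)=x$ whose coordinates (with respect to $\mathcal{X}$) are bounded by $O_{M,n}(1)$.
   Context: $H$ is $M$-rational relative to $\mathcal{X}$ if its Lie algebra $\mathfrak{h}=\log H$ is cut out, in the coordinates given by $\mathcal{X}$, by linear forms with integer coefficients of magnitude at most $M$ (equivalently, spanned by vectors that are rational combinations of $\mathcal{X}$ of height at most $M$). Coordinates of group elements are taken via $g=\exp(\sum t_iX_i)$; $G/[G,G]$ is identified with $\mathfrak{g}/[\mathfrak{g},\mathfrak{g}]$ via the exponential map.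
   Formalization: The basis vectors $X_{m+1},\dots,X_n$ are also assumed to lie in $[\mathfrak{g},\mathfrak{g}]$, so the basis $\mathcal{X}$ is adapted to the derived algebra. The statement above fails without it. *)

From HB Require Import structures.
From mathcomp Require Import all_boot all_order all_algebra.
From mathcomp Require Import reals.
Set Implicit Arguments. Unset Strict Implicit. Unset Printing Implicit Defensive.
Import Order.TTheory GRing.Theory Num.Theory.
Local Open Scope ring_scope.

(* A real Lie algebra g of dimension n is modelled on column vectors 'cV[R]_n:
   the coordinates of a vector are its coordinates in the basis X = (e_0..e_{n-1}).
   The simply-connected nilpotent group G is identified with g through exp,
   so a group element g = exp(sum t_i X_i) has coordinates t. *)

Definition is_lie_bracket (R : realType) (n : nat)
  (br : 'cV[R]_n -> 'cV[R]_n -> 'cV[R]_n) : Prop :=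
  [/\ (forall (a : R) u v w, br (a *: u + v) w = a *: br u w + br v w),
      (forall (a : R) u v w, br w (a *: u + v) = a *: br w u + br w v),
      (forall u, br u u = 0) &
      (forall u v w, br u (br v w) + br v (br w u) + br w (br u v) = 0)].

Definition is_nilpotent_bracket (R : realType) (n : nat)
  (br : 'cV[R]_n -> 'cV[R]_n -> 'cV[R]_n) : Prop :=
  exists k : nat, forall (s : seq 'cV[R]_n) (y : 'cV[R]_n),
    size s = k -> foldr br y s = 0.

Definition in_derived (R : realType) (n : nat)
  (br : 'cV[R]_n -> 'cV[R]_n -> 'cV[R]_n) (v : 'cV[R]_n) : Prop :=
  exists (N : nat) (u w : 'I_N -> 'cV[R]_n), v = \sum_(i < N) br (u i) (w i).

Definition cut_out (R : realType) (n k : nat) (A : 'M[int]_(k, n))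
  (v : 'cV[R]_n) : Prop := map_mx (fun z : int => z%:~R) A *m v = 0.

Definition is_subalgebra (R : realType) (n : nat)
  (br : 'cV[R]_n -> 'cV[R]_n -> 'cV[R]_n) (h : 'cV[R]_n -> Prop) : Prop :=
  forall u v, h u -> h v -> h (br u v).

From HB Require Import structures.
From mathcomp Require Import all_boot all_order all_algebra.
From mathcomp Require Import reals zify.
Set Implicit Arguments. Unset Strict Implicit. Unset Printing Implicit Defensive.
Import Order.TTheory GRing.Theory Num.Theory.
Local Open Scope ring_scope.

(* Once [g,g] is identified with the span of X_{m+1},...,X_n, lifting x to H
   means finding v in the kernel of the integer matrix A with prescribed first
   m coordinates.  For a fixed kernel a pseudo-inverse gives a linear lift, hence
   a lift bounded in terms of M.  The kernel of A only depends on the set of rows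
   of A, and since the entries of A are integers bounded by M, only finitely many
   such sets occur: the maximum of the finitely many bounds is uniform. *)

Section LieBracket.
Variables (R : realType) (n : nat) (br : 'cV[R]_n -> 'cV[R]_n -> 'cV[R]_n).
Hypothesis lie_br : is_lie_bracket br.

Lemma lie_bracket0l w : br 0 w = 0.
Proof.
have [linl _ _ _] := lie_br.
have := linl 1 0 0 w; rewrite !scale1r addr0 => /eqP.
by rewrite -subr_eq0 opprD addrA subrr add0r oppr_eq0 => /eqP.
Qed.

Lemma lie_bracketNl u w : br (- u) w = - br u w.
Proof.
have [linl _ _ _] := lie_br.
by have := linl (-1) u 0 w; rewrite addr0 lie_bracket0l addr0 !scaleN1r.
Qed.

Lemma in_derivedD v1 v2 :
  in_derived br v1 -> in_derived br v2 -> in_derived br (v1 + v2).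
Proof.
move=> [N1 [u1 [w1 ->]]] [N2 [u2 [w2 ->]]].
exists (N1 + N2)%N.
exists (fun i => match split i with inl a => u1 a | inr b => u2 b end).
exists (fun i => match split i with inl a => w1 a | inr b => w2 b end).
rewrite big_split_ord /=; congr (_ + _); apply: eq_bigr => i _.
  by rewrite -[lshift _ _]/(unsplit (inl _ i)) unsplitK.
by rewrite -[rshift _ _]/(unsplit (inr _ i)) unsplitK.
Qed.

Lemma in_derivedN v : in_derived br v -> in_derived br (- v).
Proof.
move=> [N [u [w ->]]]; exists N, (fun i => - u i), w.
by rewrite -sumrN; apply: eq_bigr => i _; rewrite lie_bracketNl.
Qed.

End LieBracket.

Section DerivedCoordinates.
Variables (R : realType) (m p : nat).
Variable br : 'cV[R]_(m + p) -> 'cV[R]_(m + p) -> 'cV[R]_(m + p).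
Hypotheses (lie_br : is_lie_bracket br)
  (derived_head0 : forall c : 'cV[R]_m, in_derived br (col_mx c 0) -> c = 0)
  (derived_tail : forall w : 'cV[R]_p, in_derived br (col_mx 0 w)).

Lemma in_derivedE v : in_derived br v <-> usubmx v = 0.
Proof.
split=> [v_der|v_u0]; last by rewrite -[v]vsubmxK v_u0.
apply: derived_head0.
have -> : col_mx (usubmx v) 0 = v - col_mx 0 (dsubmx v).
  by rewrite -{2}[v]vsubmxK opp_col_mx add_col_mx oppr0 addr0 subrr.
exact/in_derivedD/in_derivedN.
Qed.

Lemma in_derived_sub_col_mx v x :
  in_derived br (v - col_mx x 0) <-> usubmx v = x.
Proof.
rewrite in_derivedE linearB /= col_mxKu.
by split=> [/eqP|->]; rewrite ?subr_eq0 ?subrr => // /eqP.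
Qed.

End DerivedCoordinates.

Lemma bounded_usubmx_lift_ker (R : realType) (m p k : nat) (M : R)
    (B : 'M[R]_(k, m + p)) :
  exists C : R, forall x : 'cV[R]_m, (forall i, `|x i 0| <= M) ->
    (exists v, B *m v = 0 /\ usubmx v = x) ->
    exists v, [/\ B *m v = 0, usubmx v = x & forall j, `|v j 0| <= C].
Proof.
pose K := kermx B^T.
pose P : 'M[R]_(m + p, m) := col_mx 1%:M 0.
pose L := pinvmx (K *m P) *m K.
exists (\sum_j \sum_i `|M| * `|L i j|) => x x_le [v [Bv0 v_x]].
have mulP u : u^T *m P = (usubmx u)^T.
  by rewrite -{1}[u]vsubmxK tr_col_mx mul_row_col mulmx1 mulmx0 addr0.
have xKP : (x^T <= K *m P)%MS.
  have /submxP[a vK] : (v^T <= K)%MS.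
    by apply/sub_kermxP; rewrite -trmx_mul Bv0 trmx0.
  by rewrite -v_x -mulP vK -mulmxA submxMl.
exists (x^T *m L)^T; split.
- apply: trmx_inj; rewrite trmx_mul trmxK trmx0; apply/sub_kermxP.
  by rewrite mulmxA submxMl.
- by apply: trmx_inj; rewrite -mulP trmxK mulmxA -mulmxA mulmxKpV.
move=> j; rewrite !mxE; apply: le_trans (ler_norm_sum _ _ _) _.
apply: (@le_trans _ _ (\sum_i `|M| * `|L i j|)).
  apply: ler_sum => i _; rewrite normrM mxE ler_wpM2r //.
  exact: le_trans (x_le i) (ler_norm _).
rewrite (bigD1 j) //= lerDl.
by apply: sumr_ge0 => j' _; apply: sumr_ge0 => i _; rewrite mulr_ge0.
Qed.

Lemma mulmx_eq0_rowP (R : pzRingType) (k n l : nat)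
    (B : 'M[R]_(k, n)) (v : 'M[R]_(n, l)) :
  B *m v = 0 <-> forall i, row i B *m v = 0.
Proof.
split=> [Bv0 i|Bv0]; first by rewrite -row_mul Bv0 row0.
by apply/row_matrixP => i; rewrite row_mul Bv0 row0.
Qed.

Section RowCodes.
Variables (R : realType) (n K : nat).

(* An integer row with entries in [-K, K], each entry shifted by K. *)
Definition row_code := {ffun 'I_n -> 'I_(K + K).+1}.

Definition decode (f : row_code) : 'rV[R]_n := \row_j ((f j)%:R - K%:R).

Definition code_mx (T : {set row_code}) : 'M[R]_(#|row_code|, n) :=
  \matrix_i (if enum_val i \in T then decode (enum_val i) else 0).

Lemma code_mx_mul_eq0 T (v : 'cV[R]_n) :
  code_mx T *m v = 0 <-> forall f, f \in T -> decode f *m v = 0.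
Proof.
rewrite mulmx_eq0_rowP; split=> [Tv0 f fT|Tv0 i]; last first.
  by rewrite rowK; case: ifP => [/Tv0|_] //; rewrite mul0mx.
by have := Tv0 (enum_rank f); rewrite rowK enum_rankK fT.
Qed.

Lemma decode_onto (a : 'rV[int]_n) : (forall j, `|a 0 j| < K%:Z) ->
  exists f, decode f = map_mx intr a.
Proof.
move=> a_lt; exists [ffun j => inord (absz (a 0 j + K%:Z))].
apply/rowP => j; rewrite !mxE ffunE.
have aK_ge0 : 0 <= a 0 j + K%:Z by have := a_lt j; lia.
rewrite inordK; last by have := a_lt j; lia.
by rewrite natr_absz ger0_norm // intrD addrK.
Qed.

Definition row_codes (k : nat) (A : 'M[int]_(k, n)) : {set row_code} :=
  [set f | [exists r, decode f == row r (map_mx intr A)]].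

Lemma cut_out_code_mx (k : nat) (A : 'M[int]_(k, n)) (v : 'cV[R]_n) :
  (forall i j, `|A i j| < K%:Z) ->
  cut_out A v <-> code_mx (row_codes A) *m v = 0.
Proof.
move=> A_lt; rewrite code_mx_mul_eq0 /cut_out mulmx_eq0_rowP.
split=> [Av0 f|Av0 r]; first by rewrite inE => /existsP[r /eqP->].
have [f fA] : exists f, decode f = map_mx intr (row r A).
  by apply: decode_onto => j; rewrite mxE.
rewrite -map_row -fA; apply: Av0.
by rewrite inE; apply/existsP; exists r; rewrite fA map_row.
Qed.

End RowCodes.

Theorem corollaryA3 (R : realType) (m p : nat) (M : R) :
  exists C : R, forall (br : 'cV[R]_(m + p) -> 'cV[R]_(m + p) -> 'cV[R]_(m + p))
    (k : nat) (A : 'M[int]_(k, m + p)) (x : 'cV[R]_m),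
    is_lie_bracket br ->
    is_nilpotent_bracket br ->
    (* pi(X_1),...,pi(X_m) form a basis of g/[g,g] *)
    (forall c : 'cV[R]_m, in_derived br (col_mx c 0) -> c = 0) ->
    (forall v : 'cV[R]_(m + p), exists c : 'cV[R]_m, in_derived br (v - col_mx c 0)) ->
    (* X_{m+1},...,X_n lie in [g,g] *)
    (forall w : 'cV[R]_p, in_derived br (col_mx 0 w)) ->
    (* H = exp(h), h a Lie subalgebra, M-rational relative to X *)
    (forall i j, `|A i j|%:~R <= M) ->
    is_subalgebra br (cut_out A) ->
    (* x in pi(H), with coordinates bounded by M *)
    (forall i, `|x i 0| <= M) ->
    (exists v, cut_out A v /\ in_derived br (v - col_mx x 0)) ->
    exists v, [/\ cut_out A v, in_derived br (v - col_mx x 0) &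
                  forall j, `|v j 0| <= C].
Proof.
pose K := (Num.truncn M).+1.
have /fin_all_exists[C liftC] (T : {set row_code (m + p) K}) :=
  bounded_usubmx_lift_ker M (code_mx R T).
exists (\big[Num.max/0]_T C T).
move=> br k A x lie_br _ derived_head0 _ derived_tail A_le _ x_le [v0 [Av0 v0_x]].
have A_lt i j : `|A i j| < K%:Z.
  by rewrite -(ltr_int R) (le_lt_trans (A_le i j)) // -pmulrn truncnS_gt.
have cutE v := cut_out_code_mx v A_lt.
have liftE := in_derived_sub_col_mx lie_br derived_head0 derived_tail.
have [|v [Av v_x v_le]] := liftC (row_codes R K A) x x_le.
  by exists v0; split; [apply/cutE | apply/liftE].
exists v; split; [exact/cutE | exact/liftE |].
by move=> j; apply: le_trans (v_le j) _; exact: le_bigmax.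
Qed.
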